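(* Fix $k>0$ and $K>0$. Let $(\tau^\star,\delta^\star,\gamma^\star,s^* )$ be such that $1<\delta^\star<\Phi$, $\tau^\star=\tau_m(\delta^\star)$, and either $\gamma^\star=M_{\mathcal F}(\delta^\star)/(1+k)$ and $s^*=\pi/2$, or $0<k<1$, $\gamma^\star=M_{\mathcal F}(\delta^\star)/(1-k)$ and $s^*=3\pi/2$. Let $H=\{(\tau,\delta,\gamma,s):\ 0<\tau\le1,\ \delta>1,\ \gamma>0,\ s\in S^1,\ g(\tau,s)=0,\ \text{and } D\mathcal G_\tau(\tau,s)\text{ has eigenvalues } e^{\pm i\theta}\text{ for some }\theta\in(0,\pi)\}$, where $g$ and $\mathcal G_\tau$ are computed with parameters $\delta,\gamma$. Then $(\tau^\star,\delta^\star,\gamma^\star,s^* )$ is an accumulation point of $H$. Moreover, if $\mathbf p(\tau,\delta,\gamma,s)=(\tau,\delta,\gamma)$, then $\mathbf p(H)$ contains a smooth two-dimensional surface in $\mathbb R^3$ having $(\tau^\star,\delta^\star,\gamma^\star)$ in its closure.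
   Context: Let $p(\delta)=-\delta^2+\delta+1$, $\Phi=(1+\sqrt5)/2$, $\mathcal F_\delta(\tau)=\tau^{p(\delta)}-\tau^\delta$; for $1<\delta<\Phi$, $\tau_m(\delta)=(p(\delta)/\delta)^{1/(\delta^2-1)}$ is the maximiser of $\mathcal F_\delta$ on $(0,1]$ and $M_{\mathcal F}(\delta)=\mathcal F_\delta(\tau_m(\delta))$. With $S^1=\mathbb R/2\pi\mathbb Z$, $g(\tau,s)=\tau^{\delta^2}+\gamma\tau^{\delta^2-\delta}(1+k\sin s)-\tau$, and $\mathcal G_\tau(y,s)=\left(y^{\delta^2}+\gamma y^{\delta^2-\delta}(1+k\sin s),\ s-\frac{\ln y}{K}+\frac{\ln\tau}{K}\right)$ with derivative $D\mathcal G_\tau(y,s)=\begin{pmatrix}\delta^2y^{\delta^2-1}+\gamma(\delta^2-\delta)y^{-p(\delta)}(1+k\sin s) & \gamma k y^{\delta^2-\delta}\cos s\\ -\frac{1}{Ky} & 1\end{pmatrix}$; $D\mathcal G_\tau(\tau,s)$ denotes this matrix at $y=\tau$. *)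

From Stdlib Require Import Reals List.
From Coquelicot Require Import Coquelicot.
Open Scope R_scope.

Definition pd (d : R) : R := - d ^ 2 + d + 1.

Definition Phi : R := (1 + sqrt 5) / 2.

Definition FF (d tau : R) : R := Rpower tau (pd d) - Rpower tau d.

Definition tau_m (d : R) : R := Rpower (pd d / d) (1 / (d ^ 2 - 1)).

Definition MF (d : R) : R := FF d (tau_m d).

Definition gfun (k d gam tau s : R) : R :=
  Rpower tau (d ^ 2) + gam * Rpower tau (d ^ 2 - d) * (1 + k * sin s) - tau.

(* Entries of D G_tau(y,s) evaluated at y = tau:
   [[DGa, DGb], [DGc, DGd]] *)
Definition DGa (k d gam tau s : R) : R :=
  d ^ 2 * Rpower tau (d ^ 2 - 1)
  + gam * (d ^ 2 - d) * Rpower tau (- pd d) * (1 + k * sin s).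
Definition DGb (k d gam tau s : R) : R :=
  gam * k * Rpower tau (d ^ 2 - d) * cos s.
Definition DGc (K tau : R) : R := - (1 / (K * tau)).
Definition DGd : R := 1.

Definition is_eigenvalue2 (a b c d : R) (lam : C) : Prop :=
  exists v1 v2 : C, (v1 <> RtoC 0 \/ v2 <> RtoC 0) /\
    Cplus (Cmult (RtoC a) v1) (Cmult (RtoC b) v2) = Cmult lam v1 /\
    Cplus (Cmult (RtoC c) v1) (Cmult (RtoC d) v2) = Cmult lam v2.

Definition cis (th : R) : C := (cos th, sin th).

(* The set H (with the angle s represented by a real number; all data are
   2*pi-periodic in s, so this is the lift of H to R^4). *)
Definition Hset (k K : R) (x : R * R * R * R) : Prop :=
  let '(tau, d, gam, s) := x in
  0 < tau <= 1 /\ 1 < d /\ 0 < gam /\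
  gfun k d gam tau s = 0 /\
  exists th, 0 < th < PI /\
    is_eigenvalue2 (DGa k d gam tau s) (DGb k d gam tau s) (DGc K tau) DGd (cis th) /\
    is_eigenvalue2 (DGa k d gam tau s) (DGb k d gam tau s) (DGc K tau) DGd (cis (- th)).

Definition accumulation_point4 (A : R * R * R * R -> Prop) (p : R * R * R * R) : Prop :=
  let '(p1, p2, p3, p4) := p in
  forall eps, 0 < eps ->
    exists x1 x2 x3 x4, A (x1, x2, x3, x4) /\ (x1, x2, x3, x4) <> p /\
      Rabs (x1 - p1) < eps /\ Rabs (x2 - p2) < eps /\
      Rabs (x3 - p3) < eps /\ Rabs (x4 - p4) < eps.

Definition in_closure3 (S : R * R * R -> Prop) (p : R * R * R) : Prop :=
  let '(p1, p2, p3) := p in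
  forall eps, 0 < eps ->
    exists x1 x2 x3, S (x1, x2, x3) /\
      Rabs (x1 - p1) < eps /\ Rabs (x2 - p2) < eps /\ Rabs (x3 - p3) < eps.

Inductive coord3 := X1 | X2 | X3.

Definition shift3 (i : coord3) (t : R) (x : R * R * R) : R * R * R :=
  let '(a, b, c) := x in
  match i with
  | X1 => (a + t, b, c)
  | X2 => (a, b + t, c)
  | X3 => (a, b, c + t)
  end.

Definition partial3 (i : coord3) (f : R * R * R -> R) (x : R * R * R) : R :=
  Derive (fun t => f (shift3 i t x)) 0.

Definition iter_partial3 (l : list coord3) (f : R * R * R -> R) : R * R * R -> R :=
  fold_right partial3 f l.

Definition smooth_on3 (U : R * R * R -> Prop) (f : R * R * R -> R) : Prop :=
  forall (l : list coord3) x, U x ->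
    continuous (iter_partial3 l f) x /\
    forall i, ex_derive (fun t => iter_partial3 l f (shift3 i t x)) 0.

(* S is a (nonempty) smooth two-dimensional surface in R^3, i.e. an embedded
   C^infty submanifold of dimension 2: locally the regular zero set of a
   smooth function. *)
Definition smooth_surface3 (S : R * R * R -> Prop) : Prop :=
  (exists x, S x) /\
  forall x, S x ->
    exists (U : R * R * R -> Prop) (F : R * R * R -> R),
      open U /\ U x /\ smooth_on3 U F /\
      (forall y, U y ->
         partial3 X1 F y <> 0 \/ partial3 X2 F y <> 0 \/ partial3 X3 F y <> 0) /\
      (forall y, U y -> (S y <-> F y = 0)).

From Stdlib Require Import Reals Lra List.
From Coquelicot Require Import Coquelicot.
Open Scope R_scope.

(* On the slice gamma (1 + k sin s) = F_delta(tau) the equation g = 0 holds,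
   and with h = k cos s / (K (1 + k sin s)) and w = tau^(delta^2 - 1) the matrix
   D G_tau(tau, s) has determinant delta^2 - (delta - h)(1 - w) and trace
   2 - h (1 - w).  Hence when (delta - h)(1 - w) = delta^2 - 1 and cos s > 0 the
   determinant is 1 and the trace lies in (0, 2): the eigenvalues are e^(+-i theta)
   with theta in (0, pi).

   Solving this for w gives, for fixed delta, a curve s |-> (tau(s), delta, gamma(s), s)
   in H, defined where cos s > 0 and continuous up to the zeros s0 of cos.  There
   h = 0 and w = p(delta)/delta, i.e. tau = tau_m(delta) and
   gamma = M_F(delta)/(1 + k sin s0), so approaching s0 from the side where cos is
   positive gives the accumulation point.

   Eliminating s through (k sin s)^2 + (k cos s)^2 = k^2 projects H onto the zero set
   of (1 - w)^2 ((F - gamma)^2 - k^2 gamma^2) + K^2 (delta (1 - w) - (delta^2 - 1))^2 F^2,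
   a smooth surface because its gamma-derivative -2 (1 - w)^2 (F - gamma + k^2 gamma)
   does not vanish along the curve. *)

(* Closed-form expressions in three variables, with a symbolic partial derivative
   [dexpr]; they give smoothness of the function cutting out the surface. *)
Inductive expr : Type :=
  | EVar (i : coord3)
  | EConst (c : R)
  | EAdd (a b : expr)
  | EMul (a b : expr)
  | EInv (a : expr)
  | EExp (a : expr)
  | ELn (a : expr).

Definition coord (i : coord3) (x : R * R * R) : R :=
  match i with X1 => fst (fst x) | X2 => snd (fst x) | X3 => snd x end.

Fixpoint eval (e : expr) (x : R * R * R) : R :=
  match e with
  | EVar i => coord i x
  | EConst c => c
  | EAdd a b => eval a x + eval b x
  | EMul a b => eval a x * eval b x
  | EInv a => / eval a x
  | EExp a => exp (eval a x)
  | ELn a => ln (eval a x)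
  end.

Fixpoint defined (e : expr) (x : R * R * R) : Prop :=
  match e with
  | EVar _ | EConst _ => True
  | EAdd a b | EMul a b => defined a x /\ defined b x
  | EInv a => defined a x /\ eval a x <> 0
  | EExp a => defined a x
  | ELn a => defined a x /\ 0 < eval a x
  end.

Definition kronecker (i j : coord3) : R :=
  match i, j with X1, X1 | X2, X2 | X3, X3 => 1 | _, _ => 0 end.

Fixpoint dexpr (i : coord3) (e : expr) : expr :=
  match e with
  | EVar j => EConst (kronecker i j)
  | EConst _ => EConst 0
  | EAdd a b => EAdd (dexpr i a) (dexpr i b)
  | EMul a b => EAdd (EMul (dexpr i a) b) (EMul a (dexpr i b))
  | EInv a => EMul (EConst (-1)) (EMul (dexpr i a) (EMul (EInv a) (EInv a)))
  | EExp a => EMul (dexpr i a) (EExp a)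
  | ELn a => EMul (dexpr i a) (EInv a)
  end.

Lemma defined_dexpr i e x : defined e x -> defined (dexpr i e) x.
Proof. induction e; simpl; intros H; try tauto; destruct H; repeat split; auto; lra. Qed.

Lemma defined_iter_dexpr l e x : defined e x -> defined (fold_right dexpr e l) x.
Proof. induction l; simpl; auto using defined_dexpr. Qed.

Lemma is_derive_eval_shift3 e i x s0 : defined e (shift3 i s0 x) ->
  is_derive (fun s => eval e (shift3 i s x)) s0 (eval (dexpr i e) (shift3 i s0 x)).
Proof.
  induction e as [j|c|a IHa b IHb|a IHa b IHb|a IHa|a IHa|a IHa]; simpl.
  - intros _. destruct x as [[x1 x2] x3]; destruct i, j; simpl; auto_derive; auto; ring.
  - intros _. apply (is_derive_const c).
  - intros [Ha Hb]. exact (is_derive_plus _ _ _ _ _ (IHa Ha) (IHb Hb)).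
  - intros [Ha Hb]. exact (is_derive_mult _ _ _ _ _ (IHa Ha) (IHb Hb) Rmult_comm).
  - intros [Ha Hnz].
    set (v := eval a (shift3 i s0 x)) in *. set (dv := eval (dexpr i a) (shift3 i s0 x)) in *.
    replace (-1 * (dv * (/ v * / v))) with (- dv / v ^ 2) by (field; exact Hnz).
    exact (is_derive_inv _ _ _ (IHa Ha) Hnz).
  - intros Ha. exact (is_derive_comp exp _ _ _ _ (is_derive_exp _) (IHa Ha)).
  - intros [Ha Hpos]. exact (is_derive_comp ln _ _ _ _ (is_derive_ln _ Hpos) (IHa Ha)).
Qed.

Lemma continuous_eval e x : defined e x -> continuous (eval e) x.
Proof.
  induction e as [j|c|a IHa b IHb|a IHa b IHb|a IHa|a IHa|a IHa]; simpl.
  - intros _. destruct j; simpl.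
    + apply (continuous_comp fst fst); [apply continuous_fst | apply continuous_fst].
    + apply (continuous_comp fst snd); [apply continuous_fst | apply continuous_snd].
    + apply continuous_snd.
  - intros _. apply continuous_const.
  - intros [Ha Hb]. exact (continuous_plus _ _ _ (IHa Ha) (IHb Hb)).
  - intros [Ha Hb]. exact (continuous_mult _ _ _ (IHa Ha) (IHb Hb)).
  - intros [Ha Hnz]. exact (continuous_comp _ Rinv _ (IHa Ha) (continuous_Rinv _ Hnz)).
  - intros Ha. exact (continuous_comp _ exp _ (IHa Ha) (continuous_exp _)).
  - intros [Ha Hpos]. exact (continuous_comp _ ln _ (IHa Ha) (continuous_ln _ Hpos)).
Qed.

Lemma locally_defined e x : defined e x -> locally x (defined e).
Proof.
  induction e as [j|c|a IHa b IHb|a IHa b IHb|a IHa|a IHa|a IHa]; simpl.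
  - intros _. apply filter_true.
  - intros _. apply filter_true.
  - intros [Ha Hb]. exact (filter_and _ _ (IHa Ha) (IHb Hb)).
  - intros [Ha Hb]. exact (filter_and _ _ (IHa Ha) (IHb Hb)).
  - intros [Ha Hnz].
    exact (filter_and _ _ (IHa Ha) (continuous_eval a x Ha _ (open_neq 0 _ Hnz))).
  - exact IHa.
  - intros [Ha Hpos].
    exact (filter_and _ _ (IHa Ha) (continuous_eval a x Ha _ (open_gt 0 _ Hpos))).
Qed.

Lemma open_defined e : open (defined e).
Proof. intros x Hx. exact (locally_defined e x Hx). Qed.

Lemma shift3_0 i x : shift3 i 0 x = x.
Proof. destruct x as [[a b] c]; destruct i; simpl; now rewrite Rplus_0_r. Qed.

Lemma locally_shift3 (P : R * R * R -> Prop) i x :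
  locally x P -> locally 0 (fun s => P (shift3 i s x)).
Proof.
  intros [eps Heps]. exists eps. intros s Hs. apply Heps. change R in s.
  change (Rabs (s - 0) < eps) in Hs. rewrite Rminus_0_r in Hs.
  assert (Hshift : forall z : R, Rabs (z + s - z) < eps).
  { intros z. replace (z + s - z) with s by ring. exact Hs. }
  destruct x as [[a b] c]; destruct i; repeat split; simpl;
    first [apply ball_center | exact (Hshift _)].
Qed.

Lemma iter_partial3_eval l e x : defined e x ->
  iter_partial3 l (eval e) x = eval (fold_right dexpr e l) x.
Proof.
  revert x; induction l as [|i l IH]; simpl; intros x Hx; [reflexivity|].
  unfold partial3.
  rewrite (Derive_ext_loc _ (fun s => eval (fold_right dexpr e l) (shift3 i s x))).
  - apply is_derive_unique.
    pose proof (is_derive_eval_shift3 (fold_right dexpr e l) i x 0) as Hd.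
    rewrite shift3_0 in Hd. apply Hd, defined_iter_dexpr, Hx.
  - apply (filter_imp (fun s => defined e (shift3 i s x))); [intros s Hs; apply IH, Hs|].
    apply locally_shift3, locally_defined, Hx.
Qed.

Lemma partial3_eval e i x : defined e x -> partial3 i (eval e) x = eval (dexpr i e) x.
Proof. exact (iter_partial3_eval (i :: nil) e x). Qed.

Lemma smooth_on3_eval (U : R * R * R -> Prop) e :
  (forall x, U x -> defined e x) -> smooth_on3 U (eval e).
Proof.
  intros HU l x Hx. specialize (HU x Hx). split.
  - apply (continuous_ext_loc _ (eval (fold_right dexpr e l))).
    + apply (filter_imp (defined e)); [|apply locally_defined, HU].
      intros y Hy. symmetry. apply iter_partial3_eval, Hy.
    + apply continuous_eval, defined_iter_dexpr, HU.
  - intros i. exists (eval (dexpr i (fold_right dexpr e l)) (shift3 i 0 x)).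
    apply (is_derive_ext_loc (fun s => eval (fold_right dexpr e l) (shift3 i s x))).
    + apply (filter_imp (fun s => defined e (shift3 i s x))).
      * intros s Hs. symmetry. apply iter_partial3_eval, Hs.
      * apply locally_shift3, locally_defined, HU.
    + apply is_derive_eval_shift3. rewrite shift3_0. apply defined_iter_dexpr, HU.
Qed.

Fixpoint free_of (i : coord3) (e : expr) : Prop :=
  match e with
  | EVar j => kronecker i j = 0
  | EConst _ => True
  | EAdd a b | EMul a b => free_of i a /\ free_of i b
  | EInv a | EExp a | ELn a => free_of i a
  end.

Lemma eval_dexpr_free_of i e x : free_of i e -> eval (dexpr i e) x = 0.
Proof.
  induction e as [j|c|a IHa b IHb|a IHa b IHb|a IHa|a IHa|a IHa]; simpl; try tauto;
    intros H; try destruct H as [Ha Hb];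
    rewrite ?IHa, ?IHb by assumption; ring.
Qed.

Lemma is_eigenvalue2_cis a b c th : c <> 0 -> a - b * c = 1 -> a + 1 = 2 * cos th ->
  is_eigenvalue2 a b c DGd (cis th).
Proof.
  intros Hc Hdet Htr. unfold DGd, cis.
  (* (lambda - 1, c) is an eigenvector: the second row reads c v1 + v2 = lambda v2. *)
  exists (cos th - 1, sin th), (RtoC c). split.
  { right. intros H. apply Hc. injection H; auto. }
  pose proof (sin2_cos2 th) as Hpyth. unfold Rsqr in Hpyth.
  unfold Cplus, Cmult, RtoC; simpl. split; f_equal; nra.
Qed.

Lemma unit_circle_eigenvalues a b c : c <> 0 -> a - b * c = 1 -> -1 < a < 1 ->
  exists th, 0 < th < PI /\
    is_eigenvalue2 a b c DGd (cis th) /\ is_eigenvalue2 a b c DGd (cis (- th)).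
Proof.
  intros Hc Hdet Ha.
  assert (Hcos : -1 < (a + 1) / 2 < 1) by lra.
  exists (acos ((a + 1) / 2)). split; [apply acos_bound_lt; lra|].
  split; apply is_eigenvalue2_cis; auto; rewrite ?cos_neg, cos_acos; lra.
Qed.

Lemma FF_factor d t : FF d t = Rpower t (pd d) * (1 - Rpower t (d ^ 2 - 1)).
Proof.
  unfold FF. rewrite Rmult_minus_distr_l, Rmult_1_r, <- Rpower_plus.
  do 2 f_equal. unfold pd. ring.
Qed.

Lemma Rpower_complement_pd d t : 0 < t -> Rpower t (d ^ 2 - d) * Rpower t (pd d) = t.
Proof.
  intros Ht. rewrite <- Rpower_plus.
  replace (d ^ 2 - d + pd d) with 1 by (unfold pd; ring). apply Rpower_1, Ht.
Qed.

Lemma gfun_zero k d gam t s : 0 < t -> gam * (1 + k * sin s) = FF d t ->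
  gfun k d gam t s = 0.
Proof.
  intros Ht Hslice. unfold gfun.
  replace (Rpower t (d ^ 2)) with (Rpower t 1 * Rpower t (d ^ 2 - 1))
    by (rewrite <- Rpower_plus; f_equal; ring).
  rewrite Rpower_1 by exact Ht.
  replace (gam * Rpower t (d ^ 2 - d) * (1 + k * sin s))
    with (Rpower t (d ^ 2 - d) * (gam * (1 + k * sin s))) by ring.
  rewrite Hslice, FF_factor.
  pose proof (Rpower_complement_pd d t Ht). nra.
Qed.

Lemma DGa_slice k d gam t s : gam * (1 + k * sin s) = FF d t ->
  DGa k d gam t s = d ^ 2 * Rpower t (d ^ 2 - 1) + (d ^ 2 - d) * (1 - Rpower t (d ^ 2 - 1)).
Proof.
  intros Hslice. unfold DGa.
  replace (gam * (d ^ 2 - d) * Rpower t (- pd d) * (1 + k * sin s))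
    with ((d ^ 2 - d) * (gam * (1 + k * sin s)) * Rpower t (- pd d)) by ring.
  rewrite Hslice, FF_factor, Rpower_Ropp.
  assert (Hq : 0 < Rpower t (pd d)) by apply exp_pos.
  field. lra.
Qed.

Lemma DGb_DGc_slice k K d gam t s : 0 < t -> K <> 0 -> 1 + k * sin s <> 0 ->
  gam * (1 + k * sin s) = FF d t ->
  DGb k d gam t s * DGc K t = - (k * cos s / (K * (1 + k * sin s))) * (1 - Rpower t (d ^ 2 - 1)).
Proof.
  intros Ht HK Hu Hslice. unfold DGb, DGc.
  assert (Hgam : gam = FF d t / (1 + k * sin s)) by (rewrite <- Hslice; field; exact Hu).
  rewrite Hgam, FF_factor.
  assert (Hq : 0 < Rpower t (pd d)) by apply exp_pos.
  replace (Rpower t (d ^ 2 - d)) with (t / Rpower t (pd d))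
    by (apply (Rmult_eq_reg_r (Rpower t (pd d))); [rewrite Rpower_complement_pd by exact Ht; field|]; lra).
  field. repeat split; lra.
Qed.

Lemma Hset_of_balance k K t d g s : 0 < k -> 0 < K -> 0 < t <= 1 -> 1 < d -> 0 < g ->
  0 < 1 + k * sin s -> 0 < cos s -> Rpower t (d ^ 2 - 1) < 1 ->
  g * (1 + k * sin s) = FF d t ->
  (d - k * cos s / (K * (1 + k * sin s))) * (1 - Rpower t (d ^ 2 - 1)) = d ^ 2 - 1 ->
  Hset k K (t, d, g, s).
Proof.
  intros Hk HK Ht Hd Hg Hu Hc Hw1 Hslice Hbal.
  assert (HA := DGa_slice k d g t s Hslice).
  assert (HBC := DGb_DGc_slice k K d g t s (proj1 Ht) ltac:(lra) ltac:(lra) Hslice).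
  set (h := k * cos s / (K * (1 + k * sin s))) in *.
  set (w := Rpower t (d ^ 2 - 1)) in *.
  assert (Hw : 0 < w) by apply exp_pos.
  assert (Hh : 0 < h) by (apply Rdiv_lt_0_compat; nra).
  repeat split; try lra.
  - exact (gfun_zero k d g t s (proj1 Ht) Hslice).
  - apply unit_circle_eigenvalues.
    + unfold DGc. apply Ropp_neq_0_compat. unfold Rdiv. rewrite Rmult_1_l. apply Rinv_neq_0_compat. nra.
    + rewrite HA, HBC. nra.
    + rewrite HA. split; nra.
Qed.

Definition e_tau : expr := EVar X1.
Definition e_delta : expr := EVar X2.
Definition e_gamma : expr := EVar X3.
Definition eopp (a : expr) : expr := EMul (EConst (-1)) a.
Definition esub (a b : expr) : expr := EAdd a (eopp b).
Definition esq (a : expr) : expr := EMul a a.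
Definition epow_tau (a : expr) : expr := EExp (EMul a (ELn e_tau)).

Definition e_pd : expr := EAdd (eopp (esq e_delta)) (EAdd e_delta (EConst 1)).
Definition e_F : expr := esub (epow_tau e_pd) (epow_tau e_delta).
Definition e_w : expr := epow_tau (esub (esq e_delta) (EConst 1)).
Definition e_1w : expr := esub (EConst 1) e_w.
Definition e_hw : expr := esub (EMul e_delta e_1w) (esub (esq e_delta) (EConst 1)).

Definition surface_eq (k K : R) : expr :=
  EAdd (EMul (esq e_1w) (esub (esq (esub e_F e_gamma)) (EMul (EConst (k ^ 2)) (esq e_gamma))))
       (EMul (EConst (K ^ 2)) (EMul (esq e_hw) (esq e_F))).

(* The open set where the surface is cut out, encoded as the domain of an
   expression: [ELn] imposes positivity and [EInv] non-vanishing. *)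
Definition surface_domain (k : R) : expr :=
  EAdd (ELn e_tau) (EAdd (ELn (esub (EConst 1) e_tau)) (EAdd (ELn (esub e_delta (EConst 1)))
  (EAdd (ELn e_gamma) (EAdd (ELn e_F) (EAdd (ELn e_hw) (EAdd (ELn e_1w)
  (EInv (EAdd (esub e_F e_gamma) (EMul (EConst (k ^ 2)) e_gamma))))))))).

Definition Sset (k K : R) (y : R * R * R) : Prop :=
  defined (surface_domain k) y /\ eval (surface_eq k K) y = 0.

Section SurfaceEvaluation.
Variables t d g : R.

Lemma eval_F : eval e_F (t, d, g) = FF d t.
Proof.
  unfold e_F, FF, Rpower, epow_tau, e_pd, esub, eopp, esq, e_tau, e_delta.
  cbn [eval coord fst snd]. unfold pd.
  replace (-1 * (d * d) + (d + 1)) with (- d ^ 2 + d + 1) by ring. ring.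
Qed.

Lemma eval_1w : eval e_1w (t, d, g) = 1 - Rpower t (d ^ 2 - 1).
Proof.
  unfold e_1w, e_w, Rpower, epow_tau, esub, eopp, esq, e_tau, e_delta.
  cbn [eval coord fst snd].
  replace (d * d + -1 * 1) with (d ^ 2 - 1) by ring. ring.
Qed.

Lemma eval_hw : eval e_hw (t, d, g) = d * (1 - Rpower t (d ^ 2 - 1)) - (d ^ 2 - 1).
Proof.
  unfold e_hw, esub, eopp, esq. cbn [eval]. rewrite eval_1w.
  unfold e_delta. cbn [eval coord fst snd]. ring.
Qed.

Lemma eval_surface_eq k K : eval (surface_eq k K) (t, d, g) =
  (1 - Rpower t (d ^ 2 - 1)) ^ 2 * ((FF d t - g) ^ 2 - k ^ 2 * g ^ 2)
  + K ^ 2 * ((d * (1 - Rpower t (d ^ 2 - 1)) - (d ^ 2 - 1)) ^ 2 * FF d t ^ 2).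
Proof.
  unfold surface_eq, esub, eopp, esq. cbn [eval]. rewrite eval_1w, eval_hw, eval_F.
  unfold e_gamma. cbn [eval coord fst snd]. ring.
Qed.

Lemma dgamma_surface_eq k K : eval (dexpr X3 (surface_eq k K)) (t, d, g) =
  -2 * (1 - Rpower t (d ^ 2 - 1)) ^ 2 * (FF d t - g + k ^ 2 * g).
Proof.
  unfold surface_eq, esub, eopp, esq, e_gamma. cbn [dexpr eval coord kronecker fst snd].
  rewrite !(eval_dexpr_free_of X3) by (cbn; tauto).
  rewrite eval_1w, eval_hw, eval_F. ring.
Qed.

Lemma defined_surface_eq k K : 0 < t -> defined (surface_eq k K) (t, d, g).
Proof.
  intros Ht. unfold surface_eq, e_1w, e_hw, e_w, e_F, epow_tau, e_pd, esub, eopp, esq,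
    e_tau, e_delta, e_gamma. cbn. tauto.
Qed.

Lemma surface_domain_iff k : defined (surface_domain k) (t, d, g) <->
  0 < t /\ 0 < 1 - t /\ 0 < d - 1 /\ 0 < g /\ 0 < FF d t /\
  0 < d * (1 - Rpower t (d ^ 2 - 1)) - (d ^ 2 - 1) /\ 0 < 1 - Rpower t (d ^ 2 - 1) /\
  FF d t - g + k ^ 2 * g <> 0.
Proof.
  unfold surface_domain, esub, eopp, e_tau, e_delta, e_gamma.
  cbn [defined eval coord fst snd]. rewrite eval_F, eval_hw, eval_1w.
  unfold e_hw, e_1w, e_w, e_F, epow_tau, e_pd, esub, eopp, esq, e_tau, e_delta.
  cbn [defined eval coord fst snd].
  replace (1 + -1 * t) with (1 - t) by ring. replace (d + -1 * 1) with (d - 1) by ring.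
  replace (FF d t + -1 * g + k ^ 2 * g) with (FF d t - g + k ^ 2 * g) by ring.
  tauto.
Qed.

End SurfaceEvaluation.

Lemma smooth_surface3_Sset k K : (exists x, Sset k K x) -> smooth_surface3 (Sset k K).
Proof.
  intros Hne. split; [exact Hne|]. intros x [Hx _].
  exists (defined (surface_domain k)), (eval (surface_eq k K)).
  split; [apply open_defined|]. split; [exact Hx|]. split; [|split].
  - apply smooth_on3_eval. intros [[t d] g] Hy.
    apply defined_surface_eq, (proj1 (surface_domain_iff t d g k)), Hy.
  - intros [[t d] g] Hy. right; right.
    apply surface_domain_iff in Hy. destruct Hy as (Ht & _ & _ & _ & _ & _ & Hw & Hnz).
    rewrite partial3_eval, dgamma_surface_eq by (apply defined_surface_eq, Ht).
    apply Rmult_integral_contrapositive_currified; [|exact Hnz].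
    apply Rmult_integral_contrapositive_currified; [lra|]. apply pow_nonzero. lra.
  - intros y Hy. unfold Sset. tauto.
Qed.

Lemma eval_surface_eq_polar k K t d g u h : g * u = FF d t ->
  d * (1 - Rpower t (d ^ 2 - 1)) - (d ^ 2 - 1) = h * (1 - Rpower t (d ^ 2 - 1)) ->
  eval (surface_eq k K) (t, d, g) =
  (1 - Rpower t (d ^ 2 - 1)) ^ 2 * g ^ 2 * ((u - 1) ^ 2 + (K * h * u) ^ 2 - k ^ 2).
Proof. intros Hu Hh. rewrite eval_surface_eq, Hh, <- Hu. ring. Qed.

Lemma polar_angle k a b : 0 < k -> 0 < b -> a ^ 2 + b ^ 2 = k ^ 2 ->
  exists s, k * sin s = a /\ k * cos s = b.
Proof.
  intros Hk Hb Hab.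
  assert (Ha : -1 <= a / k <= 1).
  { assert (Hak : -k <= a <= k) by (split; nra).
    split; apply (Rmult_le_reg_r k); try lra;
      unfold Rdiv; rewrite Rmult_assoc, Rinv_l; lra. }
  exists (asin (a / k)). rewrite sin_asin, cos_asin by exact Ha. split; [field; lra|].
  replace (1 - (a / k)²) with ((b / k)²) by (unfold Rsqr; field_simplify_eq; nra).
  rewrite sqrt_Rsqr by (apply Rlt_le, Rdiv_lt_0_compat; lra). field. lra.
Qed.

Lemma Sset_in_Hset k K t d g : 0 < k -> 0 < K -> Sset k K (t, d, g) ->
  exists s, Hset k K (t, d, g, s).
Proof.
  intros Hk HK [Hdom Heq]. apply surface_domain_iff in Hdom.
  destruct Hdom as (Ht & Ht1 & Hd & Hg & HF & Hhw & Hw & _).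
  set (w := Rpower t (d ^ 2 - 1)) in *.
  set (u := FF d t / g). set (h := (d * (1 - w) - (d ^ 2 - 1)) / (1 - w)).
  assert (Hu : 0 < u) by (apply Rdiv_lt_0_compat; lra).
  assert (Hh : 0 < h) by (apply Rdiv_lt_0_compat; lra).
  assert (Hgu : g * u = FF d t) by (unfold u; field; lra).
  assert (Hhw' : d * (1 - w) - (d ^ 2 - 1) = h * (1 - w)) by (unfold h; field; lra).
  rewrite (eval_surface_eq_polar k K t d g u h Hgu Hhw') in Heq. fold w in Heq.
  assert (Hcircle : (u - 1) ^ 2 + (K * h * u) ^ 2 = k ^ 2).
  { assert (Hpos : 0 < (1 - w) ^ 2 * g ^ 2) by (apply Rmult_lt_0_compat; apply pow_lt; lra).
    apply Rmult_integral in Heq. destruct Heq as [Hz|Hz]; lra. }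
  destruct (polar_angle k (u - 1) (K * h * u)) as (s & Hsin & Hcos); auto.
  { apply Rmult_lt_0_compat; [apply Rmult_lt_0_compat|]; lra. }
  exists s. assert (Eu : 1 + k * sin s = u) by lra.
  assert (Hc : 0 < cos s) by (assert (0 < K * h * u) by (apply Rmult_lt_0_compat; nra); nra).
  apply Hset_of_balance; fold w; try lra.
  - rewrite Eu. exact Hgu.
  - rewrite Eu, Hcos. replace (d - K * h * u / (K * u)) with (d - h) by (field; lra).
    fold w. lra.
Qed.

Definition u_of (k s : R) : R := 1 + k * sin s.
Definition h_of (k K s : R) : R := k * cos s / (K * u_of k s).
Definition w_branch (k K d s : R) : R := 1 - (d ^ 2 - 1) / (d - h_of k K s).
Definition tau_branch (k K d s : R) : R := Rpower (w_branch k K d s) (1 / (d ^ 2 - 1)).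
Definition gamma_branch (k K d s : R) : R := FF d (tau_branch k K d s) / u_of k s.

Lemma pd_pos d : 1 < d < Phi -> 0 < pd d.
Proof.
  intros [H1 H2]. unfold Phi in H2. unfold pd.
  assert (Hs : sqrt 5 * sqrt 5 = 5) by (apply sqrt_sqrt; lra).
  assert (Hs0 : 0 <= sqrt 5) by apply sqrt_pos.
  nra.
Qed.

Section Branch.
Variables k K d s : R.
Hypotheses (Hk : 0 < k) (HK : 0 < K) (Hd : 1 < d).
Hypotheses (Hu : 0 < u_of k s) (Hc : 0 < cos s) (Hh : h_of k K s < pd d).

Lemma h_of_pos : 0 < h_of k K s.
Proof. apply Rdiv_lt_0_compat; [nra | apply Rmult_lt_0_compat; lra]. Qed.

Lemma w_branch_bounds : 0 < w_branch k K d s < 1.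
Proof.
  pose proof h_of_pos. unfold w_branch. unfold pd in Hh.
  assert (0 < d ^ 2 - 1) by nra.
  assert (Hq : 0 < (d ^ 2 - 1) / (d - h_of k K s) < 1).
  { split; [apply Rdiv_lt_0_compat; nra|].
    apply (Rmult_lt_reg_r (d - h_of k K s)); [lra|].
    unfold Rdiv. rewrite Rmult_assoc, Rinv_l by lra. lra. }
  lra.
Qed.

Lemma balance_branch : (d - h_of k K s) * (1 - w_branch k K d s) = d ^ 2 - 1.
Proof.
  pose proof h_of_pos. unfold w_branch. unfold pd in Hh.
  assert (0 < d ^ 2 - 1) by nra. field. lra.
Qed.

Lemma Rpower_tau_branch : Rpower (tau_branch k K d s) (d ^ 2 - 1) = w_branch k K d s.
Proof.
  pose proof w_branch_bounds. unfold tau_branch. rewrite Rpower_mult.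
  replace (1 / (d ^ 2 - 1) * (d ^ 2 - 1)) with 1 by (field; nra).
  apply Rpower_1. lra.
Qed.

Lemma tau_branch_bounds : 0 < tau_branch k K d s < 1.
Proof.
  pose proof w_branch_bounds. unfold tau_branch, Rpower.
  assert (ln (w_branch k K d s) < 0) by (rewrite <- ln_1; apply ln_increasing; lra).
  assert (0 < 1 / (d ^ 2 - 1)) by (apply Rdiv_lt_0_compat; nra).
  assert (Hneg : 1 / (d ^ 2 - 1) * ln (w_branch k K d s) < 0) by nra.
  pose proof (exp_increasing _ _ Hneg) as Hlt. rewrite exp_0 in Hlt.
  split; [apply exp_pos | exact Hlt].
Qed.

Lemma gamma_branch_slice : gamma_branch k K d s * u_of k s = FF d (tau_branch k K d s).
Proof. unfold gamma_branch. field. lra. Qed.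

Lemma FF_branch_pos : 0 < FF d (tau_branch k K d s).
Proof.
  pose proof w_branch_bounds. rewrite FF_factor, Rpower_tau_branch.
  apply Rmult_lt_0_compat; [apply exp_pos | lra].
Qed.

Lemma branch_in_Hset : Hset k K (tau_branch k K d s, d, gamma_branch k K d s, s).
Proof.
  pose proof w_branch_bounds. pose proof tau_branch_bounds. pose proof FF_branch_pos.
  apply Hset_of_balance; try lra.
  - apply Rdiv_lt_0_compat; assumption.
  - exact Hu.
  - rewrite Rpower_tau_branch. lra.
  - exact gamma_branch_slice.
  - rewrite Rpower_tau_branch. exact balance_branch.
Qed.

Lemma branch_in_Sset : u_of k s <> 1 - k ^ 2 ->
  Sset k K (tau_branch k K d s, d, gamma_branch k K d s).
Proof.
  intros Hnz.
  pose proof h_of_pos. pose proof w_branch_bounds. pose proof tau_branch_bounds.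
  pose proof FF_branch_pos. pose proof balance_branch.
  assert (Hg : 0 < gamma_branch k K d s) by (apply Rdiv_lt_0_compat; assumption).
  assert (Hhw : d * (1 - Rpower (tau_branch k K d s) (d ^ 2 - 1)) - (d ^ 2 - 1)
                = h_of k K s * (1 - Rpower (tau_branch k K d s) (d ^ 2 - 1)))
    by (rewrite Rpower_tau_branch; lra).
  split.
  - apply surface_domain_iff. rewrite <- gamma_branch_slice, Hhw, Rpower_tau_branch.
    repeat split; nra.
  - rewrite (eval_surface_eq_polar k K _ _ _ (u_of k s) (h_of k K s) gamma_branch_slice Hhw).
    replace (K * h_of k K s * u_of k s) with (k * cos s) by (unfold h_of; field; lra).
    pose proof (sin2_cos2 s) as Hpyth. unfold Rsqr in Hpyth. unfold u_of.
    replace (1 + k * sin s - 1) with (k * sin s) by ring.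
    replace ((k * sin s) ^ 2 + (k * cos s) ^ 2 - k ^ 2)
      with (k ^ 2 * (sin s * sin s + cos s * cos s - 1)) by ring.
    rewrite Hpyth. ring.
Qed.

End Branch.

Lemma continuous_FF d t : 0 < t -> continuous (FF d) t.
Proof.
  intros Ht. apply (ex_derive_continuous (FF d)).
  unfold FF, Rpower. auto_derive. lra.
Qed.

Lemma locally_one_sided (P : R -> Prop) s0 sg eps : locally s0 P -> 0 < eps -> Rabs sg = 1 ->
  exists e, 0 < e < eps /\ P (s0 + sg * e).
Proof.
  intros [rho Hrho] Heps Hsg. pose proof (cond_pos rho) as Hrho0.
  set (e := Rmin (rho / 2) (eps / 2)).
  assert (He : 0 < e) by (apply Rmin_pos; lra).
  assert (Her : e <= rho / 2) by apply Rmin_l.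
  assert (Hee : e <= eps / 2) by apply Rmin_r.
  exists e. split; [lra|]. apply Hrho.
  change (Rabs (s0 + sg * e - s0) < rho).
  replace (s0 + sg * e - s0) with (sg * e) by ring.
  rewrite Rabs_mult, Hsg, (Rabs_pos_eq e) by lra. lra.
Qed.

Section TurningPoint.
Variables k K d s0 : R.
Hypotheses (Hk : 0 < k) (HK : 0 < K) (Hd : 1 < d) (Hp : 0 < pd d).
Hypotheses (Hc0 : cos s0 = 0) (Hu0 : 0 < u_of k s0).

Lemma h_of_turning : h_of k K s0 = 0.
Proof. unfold h_of. rewrite Hc0. unfold Rdiv. ring. Qed.

Lemma tau_branch_turning : tau_branch k K d s0 = tau_m d.
Proof.
  unfold tau_branch, tau_m, w_branch. rewrite h_of_turning.
  f_equal. unfold pd. field. lra.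
Qed.

Lemma gamma_branch_turning : gamma_branch k K d s0 = MF d / u_of k s0.
Proof. unfold gamma_branch, MF. rewrite tau_branch_turning. reflexivity. Qed.

Lemma branch_continuous :
  continuous (u_of k) s0 /\ continuous (h_of k K) s0 /\
  continuous (tau_branch k K d) s0 /\ continuous (gamma_branch k K d) s0.
Proof.
  assert (Hw0 : 0 < pd d / d) by (apply Rdiv_lt_0_compat; lra).
  assert (Cu : continuous (u_of k) s0).
  { apply (ex_derive_continuous (u_of k)). unfold u_of. auto_derive. exact I. }
  assert (Ch : continuous (h_of k K) s0).
  { apply (ex_derive_continuous (h_of k K)). unfold h_of, u_of. auto_derive.
    unfold u_of in Hu0. apply Rmult_integral_contrapositive_currified; lra. }
  assert (Ct : continuous (tau_branch k K d) s0).
  { apply (ex_derive_continuous (tau_branch k K d)).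
    unfold tau_branch, w_branch, h_of, u_of, Rpower. auto_derive.
    unfold u_of in Hu0. rewrite Hc0, Rmult_0_r, Rmult_0_l, Ropp_0, Rplus_0_r.
    replace (1 + - ((d * (d * 1) - 1) * / d)) with (pd d / d) by (unfold pd; field; lra).
    repeat split; try lra. apply Rmult_integral_contrapositive_currified; lra. }
  repeat split; try assumption.
  apply (continuous_mult (fun s => FF d (tau_branch k K d s)) (fun s => / u_of k s)).
  - apply (continuous_comp (tau_branch k K d) (FF d)); [exact Ct|].
    apply continuous_FF. rewrite tau_branch_turning. apply exp_pos.
  - apply (continuous_comp (u_of k) Rinv); [exact Cu|]. apply continuous_Rinv. lra.
Qed.

Hypothesis Hnz0 : u_of k s0 <> 1 - k ^ 2.
Variable sg : R.
(* Points of H need cos s > 0, so s0 is approached from the side where cos is positive. *)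
Hypotheses (Hsg : Rabs sg = 1) (Hdir : forall e, 0 < e < PI / 2 -> 0 < cos (s0 + sg * e)).

Lemma branch_near_turning_point eps : 0 < eps ->
  exists s, s <> s0 /\ Rabs (s - s0) < eps /\
    Hset k K (tau_branch k K d s, d, gamma_branch k K d s, s) /\
    Sset k K (tau_branch k K d s, d, gamma_branch k K d s) /\
    Rabs (tau_branch k K d s - tau_m d) < eps /\
    Rabs (gamma_branch k K d s - MF d / u_of k s0) < eps.
Proof.
  intros Heps. destruct branch_continuous as (Cu & Ch & Ct & Cg).
  assert (Hnear : locally s0 (fun s => 0 < u_of k s /\ h_of k K s < pd d /\
    u_of k s <> 1 - k ^ 2 /\ Rabs (tau_branch k K d s - tau_m d) < eps /\
    Rabs (gamma_branch k K d s - MF d / u_of k s0) < eps)).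
  { assert (Hh0 : h_of k K s0 < pd d) by (rewrite h_of_turning; exact Hp).
    repeat apply filter_and.
    - exact (Cu _ (open_gt 0 _ Hu0)).
    - exact (Ch _ (open_lt (pd d) _ Hh0)).
    - exact (Cu _ (open_neq _ _ Hnz0)).
    - rewrite <- tau_branch_turning. exact (Ct _ (locally_ball _ (mkposreal eps Heps))).
    - rewrite <- gamma_branch_turning. exact (Cg _ (locally_ball _ (mkposreal eps Heps))). }
  assert (Hpi : 0 < Rmin eps (PI / 2)) by (apply Rmin_pos; [lra | pose proof PI_RGT_0; lra]).
  destruct (locally_one_sided _ s0 sg _ Hnear Hpi Hsg) as (e & He & Hu & Hh & Hnz & Ht & Hg).
  assert (He1 : e < eps) by (pose proof (Rmin_l eps (PI / 2)); lra).
  assert (He2 : e < PI / 2) by (pose proof (Rmin_r eps (PI / 2)); lra).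
  assert (Hdist : Rabs (s0 + sg * e - s0) = e).
  { replace (s0 + sg * e - s0) with (sg * e) by ring.
    rewrite Rabs_mult, Hsg, Rabs_pos_eq by lra. ring. }
  assert (Hc : 0 < cos (s0 + sg * e)) by (apply Hdir; lra).
  exists (s0 + sg * e).
  refine (conj _ (conj _ (conj _ (conj _ (conj Ht Hg))))).
  - intros Heq. rewrite Heq in Hdist. unfold Rminus in Hdist.
    rewrite Rplus_opp_r, Rabs_R0 in Hdist. lra.
  - lra.
  - apply branch_in_Hset; assumption.
  - apply branch_in_Sset; assumption.
Qed.

Lemma turning_point_accumulation_and_surface :
  accumulation_point4 (Hset k K) (tau_m d, d, MF d / u_of k s0, s0) /\
  exists S : R * R * R -> Prop,
    smooth_surface3 S /\
    (forall t d g, S (t, d, g) -> exists s, Hset k K (t, d, g, s)) /\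
    in_closure3 S (tau_m d, d, MF d / u_of k s0).
Proof.
  split.
  - intros eps Heps.
    destruct (branch_near_turning_point eps Heps) as (s & Hne & Hs & HH & _ & Ht & Hg).
    exists (tau_branch k K d s), d, (gamma_branch k K d s), s.
    split; [exact HH|]. split; [intros Heq; injection Heq; intros; contradiction|].
    rewrite (Rminus_diag_eq d d), Rabs_R0 by reflexivity. tauto.
  - exists (Sset k K). split; [|split].
    + apply smooth_surface3_Sset.
      destruct (branch_near_turning_point 1 Rlt_0_1) as (s & _ & _ & _ & HS & _).
      eexists. exact HS.
    + intros t d' g. apply Sset_in_Hset; assumption.
    + intros eps Heps.
      destruct (branch_near_turning_point eps Heps) as (s & _ & _ & _ & HS & Ht & Hg).
      exists (tau_branch k K d s), d, (gamma_branch k K d s).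
      rewrite (Rminus_diag_eq d d), Rabs_R0 by reflexivity. tauto.
Qed.

End TurningPoint.

Theorem mainTheorem9 :
  forall k K : R, 0 < k -> 0 < K ->
  forall taus ds gs ss : R,
    1 < ds < Phi ->
    taus = tau_m ds ->
    ((gs = MF ds / (1 + k) /\ ss = PI / 2) \/
     (0 < k < 1 /\ gs = MF ds / (1 - k) /\ ss = 3 * PI / 2)) ->
    accumulation_point4 (Hset k K) (taus, ds, gs, ss) /\
    exists S : R * R * R -> Prop,
      smooth_surface3 S /\
      (forall t d g, S (t, d, g) -> exists s, Hset k K (t, d, g, s)) /\
      in_closure3 S (taus, ds, gs).
Proof.
  intros k K Hk HK taus ds gs ss Hd -> Hcase.
  pose proof (pd_pos ds Hd) as Hp.
  destruct Hcase as [[-> ->] | [Hk1 [-> ->]]].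
  - assert (Eu : u_of k (PI / 2) = 1 + k) by (unfold u_of; rewrite sin_PI2; ring).
    rewrite <- Eu.
    apply (turning_point_accumulation_and_surface k K ds (PI / 2) Hk HK (proj1 Hd) Hp cos_PI2) with (sg := -1);
      rewrite ?Eu; try lra.
    + intros Heq. nra.
    + rewrite Rabs_left; lra.
    + intros e He. replace (PI / 2 + -1 * e) with (PI / 2 - e) by ring.
      rewrite cos_shift. apply sin_gt_0; lra.
  - assert (Eu : u_of k (3 * PI / 2) = 1 - k).
    { unfold u_of. replace (3 * PI / 2) with (3 * (PI / 2)) by field. rewrite sin_3PI2. ring. }
    assert (Hc : cos (3 * PI / 2) = 0).
    { replace (3 * PI / 2) with (PI / 2 + PI) by field. rewrite neg_cos, cos_PI2. ring. }
    rewrite <- Eu.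
    apply (turning_point_accumulation_and_surface k K ds (3 * PI / 2) Hk HK (proj1 Hd) Hp Hc) with (sg := 1);
      rewrite ?Eu; try lra.
    + intros Heq. nra.
    + apply Rabs_R1.
    + intros e He. rewrite Rmult_1_l, cos_plus, Hc.
      replace (3 * PI / 2) with (3 * (PI / 2)) by field. rewrite sin_3PI2.
      assert (0 < sin e) by (apply sin_gt_0; lra). lra.
Qed.
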